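(* Let $f=f(u,v)$ be a generalized timelike minimal surface with real Weierstrass data $(g_1,g_2,\hat{\omega}_1du,\hat{\omega}_2dv)$ and let $p=(0,0)$ be a non-degenerate singular point with $\operatorname{rank}(df_p)=1$ and $\hat\omega_2(p)=0$ at which $f$ is not a front. Put \[ a=\frac{(\hat{\omega}_2)_v}{\hat{\omega}_1}\left(\frac{g_1+g_2}{1+g_1^2}\right)^2(p),\qquad b=\frac{(\hat{\omega}_2)_{vv}}{2\hat{\omega}_1}\left(\frac{g_1+g_2}{1+g_1^2}\right)^2(p), \] $\tilde\eta=(av+bv^2)\partial_u+\partial_v$, $\xi=\partial_u$, and $C=\dfrac{(\hat{\omega}_2)_{vv}}{(\hat{\omega}_2)_v}(p)$. Then $\tilde\eta$ is a null vector field along the singular curve $v=0$ (i.e.\ $df(\tilde\eta)=0$ there), \[ \langle \xi f,\tilde\eta^2f\rangle_E(p)=\langle \xi f,\tilde\eta^3f\rangle_E(p)=0,\qquad \tilde\eta^3f(p)=C\,\tilde\eta^2f(p). \]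
   Context: $\mathbb{L}^3$ is $\mathbb{R}^3$ with the Lorentzian metric $\langle\,,\rangle=-dt^2+dx^2+dy^2$; $\langle\,,\rangle_E$ is the Euclidean inner product of $\mathbb{R}^3$. A generalized timelike minimal surface is a non-constant smooth map $f\colon\Sigma\to\mathbb{L}^3$ from a 2-manifold which is an immersion on an open dense subset and such that near each point there are local coordinates $(u,v)$ with $\langle f_u,f_u\rangle=\langle f_v,f_v\rangle=0$ and $f_{uv}=0$. In such coordinates $f(u,v)=\tfrac12\int_{u_0}^u(-1-g_1^2,1-g_1^2,2g_1)\hat{\omega}_1du+\tfrac12\int_{v_0}^v(1+g_2^2,1-g_2^2,-2g_2)\hat{\omega}_2dv+f(u_0,v_0)$, with $g_1,\hat\omega_1$ functions of $u$ and $g_2,\hat\omega_2$ functions of $v$ (real Weierstrass data). Standing assumption: $g_1,g_2$ take finite real values at every singular point. Such $f$ is a frontal with unit normal $n=(g_1+g_2,-g_1+g_2,1+g_1g_2)/\sqrt{(1-g_1g_2)^2+2(g_1+g_2)^2}$; $f$ is a front at $p$ if $(f,n)$ is an immersion at $p$. With $\lambda=\det(f_u,f_v,n)$, a singular point is non-degenerate if $d\lambda_p\neq0$. For a vector field $\tilde\eta$, $\tilde\eta^kf$ is the $k$-fold directional derivative $\tilde\eta\cdots\tilde\eta f$. *)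

From Stdlib Require Import Reals.
From Coquelicot Require Import Coquelicot.
Open Scope R_scope.

Definition V3 := (R * R * R)%type.
Definition c1 (x : V3) : R := fst (fst x).
Definition c2 (x : V3) : R := snd (fst x).
Definition c3 (x : V3) : R := snd x.
Definition vzero : V3 := (0, 0, 0).
Definition vadd (x y : V3) : V3 := (c1 x + c1 y, c2 x + c2 y, c3 x + c3 y).
Definition vscal (a : R) (x : V3) : V3 := (a * c1 x, a * c2 x, a * c3 x).

Definition dotE (x y : V3) : R := c1 x * c1 y + c2 x * c2 y + c3 x * c3 y.
Definition cross (x y : V3) : V3 :=
  (c2 x * c3 y - c3 x * c2 y, c3 x * c1 y - c1 x * c3 y, c1 x * c2 y - c2 x * c1 y).
Definition det3 (x y z : V3) : R := dotE (cross x y) z.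

Definition smooth1 (h : R -> R) : Prop := forall (n : nat) (x : R), ex_derive (Derive_n h n) x.

Definition pu (F : R -> R -> R) (u v : R) : R := Derive (fun x => F x v) u.
Definition pv (F : R -> R -> R) (u v : R) : R := Derive (fun y => F u y) v.

Definition vpu (F : R -> R -> V3) (u v : R) : V3 :=
  (pu (fun a b => c1 (F a b)) u v, pu (fun a b => c2 (F a b)) u v, pu (fun a b => c3 (F a b)) u v).
Definition vpv (F : R -> R -> V3) (u v : R) : V3 :=
  (pv (fun a b => c1 (F a b)) u v, pv (fun a b => c2 (F a b)) u v, pv (fun a b => c3 (F a b)) u v).

Definition vfact (X1 X2 : R -> R -> R) (F : R -> R -> V3) : R -> R -> V3 :=
  fun u v => vadd (vscal (X1 u v) (vpu F u v)) (vscal (X2 u v) (vpv F u v)).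
Definition viter (X1 X2 : R -> R -> R) (k : nat) (F : R -> R -> V3) : R -> R -> V3 :=
  Nat.iter k (vfact X1 X2) F.

(** The surface given by real Weierstrass data (g1, w1 du, g2, w2 dv),
    base point (u0,v0) and f(u0,v0) = f0. *)
Definition WF (g1 w1 g2 w2 : R -> R) (u0 v0 : R) (f0 : V3) : R -> R -> V3 :=
  fun u v =>
  ( /2 * RInt (fun s => (-1 - g1 s ^ 2) * w1 s) u0 u
      + /2 * RInt (fun t => (1 + g2 t ^ 2) * w2 t) v0 v + c1 f0,
    /2 * RInt (fun s => (1 - g1 s ^ 2) * w1 s) u0 u
      + /2 * RInt (fun t => (1 - g2 t ^ 2) * w2 t) v0 v + c2 f0,
    /2 * RInt (fun s => 2 * g1 s * w1 s) u0 u
      + /2 * RInt (fun t => -2 * g2 t * w2 t) v0 v + c3 f0 ).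

Definition nvec (g1 g2 : R -> R) : R -> R -> V3 :=
  fun u v => vscal (/ sqrt ((1 - g1 u * g2 v) ^ 2 + 2 * (g1 u + g2 v) ^ 2))
                   (g1 u + g2 v, - g1 u + g2 v, 1 + g1 u * g2 v).

Definition lam (F : R -> R -> V3) (n : R -> R -> V3) : R -> R -> R :=
  fun u v => det3 (vpu F u v) (vpv F u v) (n u v).

Definition lin_dep2 (x y : V3) : Prop :=
  exists al be : R, (al <> 0 \/ be <> 0) /\ vadd (vscal al x) (vscal be y) = vzero.

Definition immersion_at (F : R -> R -> V3) (u v : R) : Prop :=
  ~ lin_dep2 (vpu F u v) (vpv F u v).

(** f is an immersion on a dense (automatically open) subset of the coordinate plane. *)
Definition immersion_dense (F : R -> R -> V3) : Prop :=
  forall u v eps, 0 < eps ->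
    exists u' v', Rabs (u' - u) < eps /\ Rabs (v' - v) < eps /\ immersion_at F u' v'.

Definition rank_df_one (F : R -> R -> V3) (u v : R) : Prop :=
  lin_dep2 (vpu F u v) (vpv F u v) /\ (vpu F u v <> vzero \/ vpv F u v <> vzero).

Definition nondegenerate (F n : R -> R -> V3) (u v : R) : Prop :=
  pu (lam F n) u v <> 0 \/ pv (lam F n) u v <> 0.

(** f is a front at p iff (f,n) : R^2 -> R^6 is an immersion at p;
    i.e. the columns (f_u,n_u), (f_v,n_v) of R^6 are linearly independent. *)
Definition front_at (F n : R -> R -> V3) (u v : R) : Prop :=
  ~ (exists al be : R, (al <> 0 \/ be <> 0) /\
       vadd (vscal al (vpu F u v)) (vscal be (vpv F u v)) = vzero /\
       vadd (vscal al (vpu n u v)) (vscal be (vpv n u v)) = vzero).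

From Stdlib Require Import Reals Lra Psatz FunctionalExtensionality Classical.
From Coquelicot Require Import Coquelicot.
Open Scope R_scope.

(* In null coordinates f is a translation surface: f_u = w1 * null_u (g1) depends on u only and
   f_v = w2 * null_v (g2) on v only. For eta = phi(v) d/du + d/dv with phi(0) = 0 this gives
   eta f = f_v = 0 on v = 0 (as w2(0) = 0), and at p: eta^2 f = phi'(0) f_u + f_vv and
   eta^3 f = phi''(0) f_u + f_vvv. The hypotheses at p give w1(0) <> 0 (rank one),
   w2'(0) <> 0 (lambda = w2 * (...), so d lambda_p = w2'(0) * (...) dv) and g2'(0) = 0 (the
   kernel of d(f,n) at p is d/dv, and n_v(p) is a combination of n and g2'(0) (1, 1, g1(0))).
   Hence f_vv(p) = w2'(0) null_v (g2(0)) and f_vvv(p) = w2''(0) null_v (g2(0)). Finally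
   <null_u s, null_u s>_E = (1 + s^2)^2 / 2 and <null_u s, null_v t>_E = - (s + t)^2 / 2, so
   phi'(0) = a and phi''(0) = 2b are exactly the coefficients making eta^2 f(p) and eta^3 f(p)
   orthogonal to f_u(p), and 2b = C a gives eta^3 f(p) = C eta^2 f(p). *)

Lemma V3_ext (x y : V3) : c1 x = c1 y -> c2 x = c2 y -> c3 x = c3 y -> x = y.
Proof. destruct x as [[x1 x2] x3], y as [[y1 y2] y3]; cbn; intros -> -> ->; reflexivity. Qed.

Definition sfact (X1 X2 : R -> R -> R) (G : R -> R -> R) : R -> R -> R :=
  fun u v => X1 u v * pu G u v + X2 u v * pv G u v.
Definition siter (X1 X2 : R -> R -> R) (k : nat) (G : R -> R -> R) : R -> R -> R :=
  Nat.iter k (sfact X1 X2) G.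

Lemma viter_coord (c : V3 -> R) (X1 X2 : R -> R -> R) :
  (forall F u v, c (vfact X1 X2 F u v) = sfact X1 X2 (fun a b => c (F a b)) u v) ->
  forall k F u v, c (viter X1 X2 k F u v) = siter X1 X2 k (fun a b => c (F a b)) u v.
Proof.
  intros Hc k F; induction k as [|k IH]; intros u v; [reflexivity|].
  change (c (vfact X1 X2 (viter X1 X2 k F) u v)
    = sfact X1 X2 (siter X1 X2 k (fun a b => c (F a b))) u v).
  rewrite Hc; f_equal.
  do 2 (apply functional_extensionality; intro); apply IH.
Qed.

(* [auto_derive] eta-expands unknown functions, which [ring] then treats as new atoms. *)
Ltac eta_reduce :=
  repeat match goal with |- context [fun x => ?F x] => change (fun x => F x) with F end.

Ltac solve_derive :=
  apply is_derive_unique; auto_derive; [repeat split; auto | eta_reduce; ring].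

Section TranslationFlow.
Variables (phi P Q Q' : R -> R) (q2 : R) (G : R -> R -> R).
Hypothesis phi0 : phi 0 = 0.
Hypothesis phi_ex_derive : forall v, ex_derive phi v.
Hypothesis phi'_ex_derive : ex_derive (Derive phi) 0.
Hypothesis P_ex_derive : forall u, ex_derive P u.
Hypothesis Q_is_derive : forall v, is_derive Q v (Q' v).
Hypothesis Q'_is_derive : is_derive Q' 0 q2.
Hypothesis G_pu : forall u v, pu G u v = P u.
Hypothesis G_pv : forall u v, pv G u v = Q v.

Let X1 (_ v : R) : R := phi v.
Let X2 (_ _ : R) : R := 1.

Lemma siter2_translation :
  siter X1 X2 2 G = fun u v => phi v * (phi v * Derive P u) + (Derive phi v * P u + Q' v).
Proof.
  assert (Hiter1 : siter X1 X2 1 G = fun u v => phi v * P u + Q v).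
  { do 2 (apply functional_extensionality; intro).
    unfold siter, sfact, X1, X2; cbn; rewrite G_pu, G_pv; ring. }
  apply functional_extensionality; intro u; apply functional_extensionality; intro v.
  change (siter X1 X2 2 G) with (sfact X1 X2 (siter X1 X2 1 G)).
  unfold sfact at 1; rewrite Hiter1; unfold pu, pv, X1, X2.
  replace (Derive (fun s => phi v * P s + Q v) u) with (phi v * Derive P u) by (symmetry; solve_derive).
  replace (Derive (fun t => phi t * P u + Q t) v) with (Derive phi v * P u + Q' v).
  - ring.
  - symmetry; apply is_derive_unique; auto_derive.
    + repeat split; auto; eexists; apply Q_is_derive.
    + eta_reduce; rewrite (is_derive_unique _ _ _ (Q_is_derive v)); ring.
Qed.

Lemma siter2_origin : siter X1 X2 2 G 0 0 = Derive phi 0 * P 0 + Q' 0.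
Proof. rewrite siter2_translation, phi0; ring. Qed.

Lemma siter3_origin : siter X1 X2 3 G 0 0 = Derive (Derive phi) 0 * P 0 + q2.
Proof.
  change (siter X1 X2 3 G 0 0) with (sfact X1 X2 (siter X1 X2 2 G) 0 0).
  unfold sfact, pv; rewrite siter2_translation; unfold X1, X2.
  rewrite phi0, <- (is_derive_unique _ _ _ Q'_is_derive).
  replace (Derive (fun t => phi t * (phi t * Derive P 0) + (Derive phi t * P 0 + Q' t)) 0)
    with (Derive (Derive phi) 0 * P 0 + Derive Q' 0).
  - ring.
  - symmetry; apply is_derive_unique; auto_derive.
    + repeat split; auto; eexists; exact Q'_is_derive.
    + eta_reduce; rewrite phi0; ring.
Qed.

End TranslationFlow.

Lemma smooth1_ex_derive (h : R -> R) : smooth1 h -> forall x, ex_derive h x.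
Proof. intros H x; exact (H 0%nat x). Qed.

Lemma smooth1_ex_derive_Derive (h : R -> R) : smooth1 h -> forall x, ex_derive (Derive h) x.
Proof. intros H x; exact (H 1%nat x). Qed.

Lemma RInt_derive_conditions (h : R -> R) (a x : R) : (forall t, continuous h t) ->
  ex_RInt h a x /\ locally x (fun t => continuity_pt h t) /\ True.
Proof.
  intros Hh; repeat split.
  - apply (ex_RInt_continuous (V := R_CompleteNormedModule)); auto.
  - apply filter_forall; intro t; apply continuity_pt_filterlim, Hh.
Qed.

Lemma Derive_half_RInt_l (h : R -> R) (a K K' x : R) : (forall t, continuous h t) ->
  Derive (fun y => /2 * RInt h a y + K + K') x = /2 * h x.
Proof. intros Hh; apply is_derive_unique; auto_derive; [apply RInt_derive_conditions, Hh | ring]. Qed.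

Lemma Derive_half_RInt_r (h : R -> R) (a K K' x : R) : (forall t, continuous h t) ->
  Derive (fun y => K + /2 * RInt h a y + K') x = /2 * h x.
Proof. intros Hh; apply is_derive_unique; auto_derive; [apply RInt_derive_conditions, Hh | ring]. Qed.

Definition null_u (s : R) : V3 := vscal (/2) (-1 - s ^ 2, 1 - s ^ 2, 2 * s).
Definition null_v (t : R) : V3 := vscal (/2) (1 + t ^ 2, 1 - t ^ 2, -2 * t).
Definition dnull_v (t : R) : V3 := vscal (/2) (2 * t, -2 * t, -2).

(* [nvec g1 g2 u v] unfolds to [vscal (/ sqrt (nsq (g1 u) (g2 v))) (ndir (g1 u) (g2 v))]. *)
Definition ndir (x t : R) : V3 := (x + t, - x + t, 1 + x * t).
Definition nsq (x t : R) : R := (1 - x * t) ^ 2 + 2 * (x + t) ^ 2.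

Lemma nsq_pos (x t : R) : 0 < nsq x t.
Proof.
  unfold nsq; destruct (Req_dec (x + t) 0) as [H|H].
  - replace t with (- x) by lra; nra.
  - pose proof (pow2_gt_0 _ H); nra.
Qed.

Lemma vscal_0_l (x : V3) : vscal 0 x = vzero.
Proof. apply V3_ext; cbn; ring. Qed.

Lemma vadd_vzero_l (x : V3) : vadd vzero x = x.
Proof. apply V3_ext; cbn; ring. Qed.

Lemma vscal_vzero_inv (a : R) (x : V3) : a <> 0 -> vscal a x = vzero -> x = vzero.
Proof.
  intros Ha E; apply V3_ext;
    [apply (f_equal c1) in E | apply (f_equal c2) in E | apply (f_equal c3) in E];
    cbn in *; apply Rmult_integral in E; tauto.
Qed.

Lemma det3_vscal (a b : R) (x y z : V3) : det3 (vscal a x) (vscal b y) z = a * b * det3 x y z.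
Proof. unfold det3, cross, dotE, vscal, c1, c2, c3; cbn; ring. Qed.

Lemma ndir_indep (x t al be : R) : vadd (vscal al (ndir x t)) (vscal be (1, 1, x)) = vzero -> be = 0.
Proof.
  intros E.
  assert (E1 := f_equal c1 E); assert (E2 := f_equal c2 E); assert (E3 := f_equal c3 E).
  cbn in E1, E2, E3.
  assert (Hx : al * x = 0) by lra.
  assert (Hal : al = 0).
  { replace al with (al * (1 + x * t) + be * x - x * (al * (x + t) + be * 1) + x * (al * x)) by ring.
    rewrite E3, E1, Hx; ring. }
  subst al; lra.
Qed.

Lemma Derive_mult_vanishing (w H : R -> R) :
  w 0 = 0 -> ex_derive w 0 -> ex_derive H 0 -> Derive (fun t => w t * H t) 0 = Derive w 0 * H 0.
Proof. intros Hw0 Dw DH; rewrite Derive_mult, Hw0 by assumption; ring. Qed.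

(* Side conditions of [auto_derive] on [nvec], where [nsq] appears in expanded form. *)
Ltac nsq_pos_side :=
  match goal with
  | |- sqrt _ <> 0 => apply Rgt_not_eq, sqrt_lt_R0; nsq_pos_side
  | |- 0 < (1 + - (?x * ?t)) * _ + _ => generalize (nsq_pos x t); unfold nsq; nra
  end.

Section WeierstrassSurface.
Variables (g1 w1 g2 w2 : R -> R) (u0 v0 : R) (f0 : V3).
Hypotheses (Hg1 : smooth1 g1) (Hw1 : smooth1 w1) (Hg2 : smooth1 g2) (Hw2 : smooth1 w2).
Let f := WF g1 w1 g2 w2 u0 v0 f0.

Let Dg1 := smooth1_ex_derive g1 Hg1.
Let Dw1 := smooth1_ex_derive w1 Hw1.
Let Dg2 := smooth1_ex_derive g2 Hg2.
Let Dw2 := smooth1_ex_derive w2 Hw2.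
Let DDg2 := smooth1_ex_derive_Derive g2 Hg2.
Let DDw2 := smooth1_ex_derive_Derive w2 Hw2.

Ltac continuity_from_derive :=
  intro; apply (@ex_derive_continuous R_AbsRing R_NormedModule); auto_derive; repeat split; auto.

Lemma WF_pu u v : vpu f u v = vscal (w1 u) (null_u (g1 u)).
Proof.
  apply V3_ext; unfold f, WF, vpu, pu, null_u, vscal, c1, c2, c3; cbn [fst snd];
    (rewrite Derive_half_RInt_l; [ring | continuity_from_derive]).
Qed.

Lemma WF_pv u v : vpv f u v = vscal (w2 v) (null_v (g2 v)).
Proof.
  apply V3_ext; unfold f, WF, vpv, pv, null_v, vscal, c1, c2, c3; cbn [fst snd];
    (rewrite Derive_half_RInt_r; [ring | continuity_from_derive]).
Qed.

Lemma WF_lam u v :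
  lam f (nvec g1 g2) u v = w2 v * (w1 u * det3 (null_u (g1 u)) (null_v (g2 v)) (nvec g1 g2 u v)).
Proof. unfold lam; rewrite WF_pu, WF_pv, det3_vscal; ring. Qed.

Lemma vpv_nvec u v :
  vpv (nvec g1 g2) u v =
  vadd (vscal (Derive (fun y => / sqrt (nsq (g1 u) (g2 y))) v) (ndir (g1 u) (g2 v)))
       (vscal (/ sqrt (nsq (g1 u) (g2 v)) * Derive g2 v) (1, 1, g1 u)).
Proof.
  apply V3_ext; unfold vpv, pv, nvec, ndir, nsq, vadd, vscal, c1, c2, c3; cbn [fst snd];
    (rewrite Derive_mult by (auto_derive; repeat split; auto; nsq_pos_side);
     apply Rplus_eq_compat_l; rewrite Rmult_assoc; f_equal; solve_derive).
Qed.

Hypothesis Hw20 : w2 0 = 0.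

Lemma WF_w1_neq0 : rank_df_one f 0 0 -> w1 0 <> 0.
Proof.
  intros [_ Hnz] Hw10; rewrite WF_pu, WF_pv, Hw10, Hw20, !vscal_0_l in Hnz; tauto.
Qed.

Lemma WF_Derive_w2_neq0 : nondegenerate f (nvec g1 g2) 0 0 -> Derive w2 0 <> 0.
Proof.
  intros Hnd Hd; destruct Hnd as [H|H]; apply H; unfold pu, pv.
  - rewrite (Derive_ext _ (fun _ => 0)) by (intro; rewrite WF_lam, Hw20; ring).
    apply Derive_const.
  - rewrite (Derive_ext _ (fun y => w2 y * (w1 0 * det3 (null_u (g1 0)) (null_v (g2 y)) (nvec g1 g2 0 y))))
      by (intro; apply WF_lam).
    rewrite Derive_mult_vanishing, Hd; [ring | assumption | auto |].
    unfold det3, cross, dotE, nvec, null_u, null_v, vscal, c1, c2, c3; cbn [fst snd].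
    auto_derive; repeat split; auto; nsq_pos_side.
Qed.

Lemma WF_Derive_g2_eq0 : w1 0 <> 0 -> ~ front_at f (nvec g1 g2) 0 0 -> Derive g2 0 = 0.
Proof.
  intros Hw10 Hnf; apply NNPP in Hnf; destruct Hnf as (al & be & Hab & Ef & En).
  assert (Hal : al = 0).
  { apply (f_equal c1) in Ef; rewrite WF_pu, WF_pv, Hw20 in Ef.
    unfold vadd, vscal, null_u, vzero, c1 in Ef; cbn in Ef.
    pose proof (pow2_ge_0 (g1 0)).
    assert (Hprod : al * w1 0 * (1 + g1 0 ^ 2) = 0) by lra.
    apply Rmult_integral in Hprod; destruct Hprod as [Hprod|]; [|lra].
    apply Rmult_integral in Hprod; tauto. }
  subst al; destruct Hab as [|Hbe]; [lra|].
  rewrite vscal_0_l, vadd_vzero_l in En.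
  apply vscal_vzero_inv in En; [|exact Hbe].
  rewrite vpv_nvec in En; apply ndir_indep, Rmult_integral in En.
  destruct En as [En|]; [|assumption].
  exfalso; revert En; apply Rinv_neq_0_compat, Rgt_not_eq, sqrt_lt_R0, nsq_pos.
Qed.

Hypothesis Hdg2 : Derive g2 0 = 0.
Variable phi : R -> R.
Hypotheses (phi0 : phi 0 = 0) (Dphi : forall v, ex_derive phi v) (DDphi : ex_derive (Derive phi) 0).

Lemma WF_eta1_null (u : R) : viter (fun _ v => phi v) (fun _ _ => 1) 1 f u 0 = vzero.
Proof.
  change (vadd (vscal (phi 0) (vpu f u 0)) (vscal 1 (vpv f u 0)) = vzero).
  rewrite phi0, WF_pv, Hw20, !vscal_0_l; apply V3_ext; cbn; ring.
Qed.

Ltac coord_flow_hyps c :=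
  first
  [ assumption
  | intros u v; exact (f_equal c (WF_pu u v))
  | intros u v; exact (f_equal c (WF_pv u v))
  | intro; unfold vadd, null_u, null_v, dnull_v, vscal, c1, c2, c3; cbn [fst snd];
    auto_derive; solve [repeat split; auto | eta_reduce; ring]
  | unfold vadd, null_v, dnull_v, vscal, c1, c2, c3; cbn [fst snd];
    auto_derive; solve [repeat split; auto | eta_reduce; rewrite Hw20, Hdg2; ring] ].

Lemma WF_eta2_origin :
  viter (fun _ v => phi v) (fun _ _ => 1) 2 f 0 0 =
  vadd (vscal (Derive phi 0) (vpu f 0 0)) (vscal (Derive w2 0) (null_v (g2 0))).
Proof.
  apply V3_ext;
  match goal with |- ?c (viter _ _ _ _ _ _) = _ =>
    rewrite (viter_coord c) by reflexivity;
    rewrite (siter2_origin phi (fun u => c (vscal (w1 u) (null_u (g1 u))))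
      (fun v => c (vscal (w2 v) (null_v (g2 v))))
      (fun v => c (vadd (vscal (Derive w2 v) (null_v (g2 v))) (vscal (w2 v * Derive g2 v) (dnull_v (g2 v)))))
      (fun a b => c (f a b))); try coord_flow_hyps c
  end;
  rewrite WF_pu, Hw20; unfold vadd, vscal, c1, c2, c3; cbn [fst snd]; ring.
Qed.

Lemma WF_eta3_origin :
  viter (fun _ v => phi v) (fun _ _ => 1) 3 f 0 0 =
  vadd (vscal (Derive (Derive phi) 0) (vpu f 0 0)) (vscal (Derive (Derive w2) 0) (null_v (g2 0))).
Proof.
  apply V3_ext;
  match goal with |- ?c (viter _ _ _ _ _ _) = _ =>
    rewrite (viter_coord c) by reflexivity;
    rewrite (siter3_origin phi (fun u => c (vscal (w1 u) (null_u (g1 u))))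
      (fun v => c (vscal (w2 v) (null_v (g2 v))))
      (fun v => c (vadd (vscal (Derive w2 v) (null_v (g2 v))) (vscal (w2 v * Derive g2 v) (dnull_v (g2 v)))))
      (c (vscal (Derive (Derive w2) 0) (null_v (g2 0))))
      (fun a b => c (f a b))); try coord_flow_hyps c
  end;
  rewrite WF_pu; unfold vadd, vscal, c1, c2, c3; cbn [fst snd]; ring.
Qed.
End WeierstrassSurface.

Lemma Derive_quadratic (a b : R) : Derive (fun v => a * v + b * v ^ 2) = fun v => a + 2 * b * v.
Proof. apply functional_extensionality; intro v; solve_derive. Qed.

Lemma Derive2_quadratic (a b : R) : Derive (Derive (fun v => a * v + b * v ^ 2)) 0 = 2 * b.
Proof. rewrite Derive_quadratic; solve_derive. Qed.

(* Both [eta^2 f (p)] and [eta^3 f (p)] have this shape, with [d] = [w2'(0)] resp. [w2''(0)]. *)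
Definition eta_jet (w s t d : R) : V3 :=
  vadd (vscal (d / w * ((s + t) / (1 + s ^ 2)) ^ 2) (vscal w (null_u s))) (vscal d (null_v t)).

Lemma dotE_eta_jet (w s t d : R) : w <> 0 -> dotE (vscal w (null_u s)) (eta_jet w s t d) = 0.
Proof.
  intros Hw; pose proof (pow2_ge_0 s).
  unfold eta_jet, dotE, vadd, null_u, null_v, vscal, c1, c2, c3; cbn [fst snd].
  field; split; [lra | exact Hw].
Qed.

Lemma eta_jet_scale (w s t d d' : R) : d' <> 0 -> eta_jet w s t d = vscal (d / d') (eta_jet w s t d').
Proof.
  intros Hd'; apply V3_ext; unfold eta_jet, vadd, vscal, c1, c2, c3, Rdiv; cbn [fst snd];
    generalize (/ w) (/ (1 + s ^ 2)); intros; field; exact Hd'.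
Qed.

Theorem lemma4p5 (g1 w1 g2 w2 : R -> R) (u0 v0 : R) (f0 : V3) :
  smooth1 g1 -> smooth1 w1 -> smooth1 g2 -> smooth1 w2 ->
  (* f is a generalized timelike minimal surface: immersion on an open dense set *)
  immersion_dense (WF g1 w1 g2 w2 u0 v0 f0) ->
  (* p = (0,0) is a singular point *)
  ~ immersion_at (WF g1 w1 g2 w2 u0 v0 f0) 0 0 ->
  nondegenerate (WF g1 w1 g2 w2 u0 v0 f0) (nvec g1 g2) 0 0 ->
  rank_df_one (WF g1 w1 g2 w2 u0 v0 f0) 0 0 ->
  w2 0 = 0 ->
  ~ front_at (WF g1 w1 g2 w2 u0 v0 f0) (nvec g1 g2) 0 0 ->
  let f := WF g1 w1 g2 w2 u0 v0 f0 in
  let k := ((g1 0 + g2 0) / (1 + g1 0 ^ 2)) ^ 2 in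
  let a := Derive w2 0 / w1 0 * k in
  let b := Derive_n w2 2 0 / (2 * w1 0) * k in
  let C := Derive_n w2 2 0 / Derive w2 0 in
  let X1 := fun (u v : R) => a * v + b * v ^ 2 in
  let X2 := fun (u v : R) => 1 in
  let xi_f := vpu f in
  (forall u : R, viter X1 X2 1 f u 0 = vzero) /\
  dotE (xi_f 0 0) (viter X1 X2 2 f 0 0) = 0 /\
  dotE (xi_f 0 0) (viter X1 X2 3 f 0 0) = 0 /\
  viter X1 X2 3 f 0 0 = vscal C (viter X1 X2 2 f 0 0).
Proof.
  intros Hg1 Hw1 Hg2 Hw2 _ _ Hnd Hrank Hw20 Hnf f k a b C X1 X2 xi_f.
  pose proof (WF_w1_neq0 g1 w1 g2 w2 u0 v0 f0 Hg1 Hw1 Hg2 Hw2 Hw20 Hrank) as Hw10.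
  pose proof (WF_Derive_w2_neq0 g1 w1 g2 w2 u0 v0 f0 Hg1 Hw1 Hg2 Hw2 Hw20 Hnd) as Hdw2.
  pose proof (WF_Derive_g2_eq0 g1 w1 g2 w2 u0 v0 f0 Hg1 Hw1 Hg2 Hw2 Hw20 Hw10 Hnf) as Hdg2.
  set (phi v := a * v + b * v ^ 2).
  assert (phi0 : phi 0 = 0) by (unfold phi; ring).
  assert (Dphi : forall v, ex_derive phi v) by (intro; unfold phi; auto_derive; auto).
  assert (DDphi : ex_derive (Derive phi) 0) by (unfold phi; rewrite Derive_quadratic; auto_derive; auto).
  assert (E2 : viter X1 X2 2 f 0 0 = eta_jet (w1 0) (g1 0) (g2 0) (Derive w2 0)).
  { etransitivity; [exact (WF_eta2_origin g1 w1 g2 w2 u0 v0 f0 Hg1 Hw1 Hg2 Hw2 Hw20 phi phi0 Dphi)|].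
    rewrite WF_pu by auto.
    unfold phi; rewrite Derive_quadratic; unfold eta_jet, a, k; f_equal; f_equal; ring. }
  assert (E3 : viter X1 X2 3 f 0 0 = eta_jet (w1 0) (g1 0) (g2 0) (Derive_n w2 2 0)).
  { etransitivity; [exact (WF_eta3_origin g1 w1 g2 w2 u0 v0 f0 Hg1 Hw1 Hg2 Hw2 Hw20 Hdg2 phi phi0 Dphi DDphi)|].
    rewrite WF_pu by auto.
    unfold phi; rewrite Derive2_quadratic; unfold eta_jet, b, k; f_equal; f_equal.
    change (Derive (Derive w2) 0) with (Derive_n w2 2 0); field; split; [nra | exact Hw10]. }
  split; [intro u; exact (WF_eta1_null g1 w1 g2 w2 u0 v0 f0 Hg2 Hw2 Hw20 phi phi0 u)|].
  rewrite E2, E3; unfold xi_f, f; rewrite WF_pu by auto.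
  split; [|split]; [apply dotE_eta_jet, Hw10 | apply dotE_eta_jet, Hw10 | apply eta_jet_scale, Hdw2].
Qed.
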